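(* Let $\boldsymbol\mu\subset\mathfrak G^{\mathrm{small}}$ be a ratio set. Assume $\boldsymbol\mu$ witnesses $V\in\mathbb T$, the series $S=\sum_{j\ge1}B_j$ converges $\boldsymbol\mu$-geometrically, and for $j=1,2,3,\dots$, $\boldsymbol\mu$ witnesses $A_j$ and $A_j\sim B_jV$. Then $T=\sum_{j\ge1}A_j$ converges $\boldsymbol\mu$-geometrically and $T\sim SV$.
   Context: $\mathbb T$ is the field of real grid-based transseries over the ordered group $\mathfrak G$ of transmonomials, with $\sim$ the usual asymptotic equivalence ($A\sim B$ iff $A-B\prec A$); $\operatorname{mag}T$ is the dominant monomial of $T\ne0$. A ratio set is a finite $\boldsymbol\mu\subset\mathfrak G^{\mathrm{small}}=\{\mathfrak g\prec1\}$; $\boldsymbol\mu^*$ (resp. $\boldsymbol\mu^+$) is the set of products of zero or more (resp. one or more) elements of $\boldsymbol\mu$. Monomials: $\mathfrak m\prec^{\boldsymbol\mu}\mathfrak n$ iff $\mathfrak m/\mathfrak n\in\boldsymbol\mu^+$; transseries: $A\prec^{\boldsymbol\mu}B$ (also written $B\succ^{\boldsymbol\mu}A$) iff each $\mathfrak a\in\operatorname{supp}A$ is $\prec^{\boldsymbol\mu}$ some $\mathfrak b\in\operatorname{supp}B$. $\boldsymbol\mu$ witnesses nonzero $T$ iff $\operatorname{supp}T\subseteq(\operatorname{mag}T)\boldsymbol\mu^*$. A series $\sum_{j\ge1}A_j$ is $\boldsymbol\mu$-geometrically convergent if $\boldsymbol\mu$ witnesses each $A_j$ and $A_j\succ^{\boldsymbol\mu}A_{j+1}$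 for all $j$; such a series converges (point-finitely) in $\mathbb T$. *)

From HB Require Import structures.
From mathcomp Require Import all_boot all_order all_algebra.
From mathcomp Require Import boolp classical_sets fsbigop reals.

Set Implicit Arguments.
Unset Strict Implicit.
Unset Printing Implicit Defensive.
Import Order.TTheory GRing.Theory Num.Theory.
Local Open Scope classical_set_scope.
Local Open Scope ring_scope.

(* A (multiplicatively written) totally ordered abelian group of monomials.
   [og_lt m n] is m ≺ n ("m is smaller than n"). *)
Record ogroup := OGroup {
  og_car :> choiceType;
  og_mul : og_car -> og_car -> og_car;
  og_one : og_car;
  og_inv : og_car -> og_car;
  og_lt  : og_car -> og_car -> Prop;
  og_mulA : forall x y z, og_mul x (og_mul y z) = og_mul (og_mul x y) z;
  og_mulC : forall x y, og_mul x y = og_mul y x;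
  og_mul1 : forall x, og_mul og_one x = x;
  og_mulV : forall x, og_mul (og_inv x) x = og_one;
  og_lt_irr : forall x, ~ og_lt x x;
  og_lt_trans : forall x y z, og_lt x y -> og_lt y z -> og_lt x z;
  og_lt_total : forall x y, og_lt x y \/ x = y \/ og_lt y x;
  og_lt_mul : forall x y z, og_lt x y -> og_lt (og_mul x z) (og_mul y z)
}.

Section Series.
Variables (G : ogroup) (R : realType).


Definition tseries := G -> R.

Definition supp (A : tseries) : set G := [set m | A m != 0].

Definition is_mag (A : tseries) (m : G) : Prop :=
  supp A m /\ forall n, supp A n -> og_lt n m \/ n = m.

Definition ratio_set (mu : seq G) : Prop :=
  forall g, g \in mu -> og_lt g (og_one G).

Definition prodG (s : seq G) : G := foldr (@og_mul G) (og_one G) s.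

Definition mustar (mu : seq G) : set G :=
  [set g | exists s : seq G, {subset s <= mu} /\ g = prodG s].
Definition muplus (mu : seq G) : set G :=
  [set g | exists s : seq G, s != [::] /\ {subset s <= mu} /\ g = prodG s].

Definition mprec (mu : seq G) (m n : G) : Prop :=
  muplus mu (og_mul m (og_inv n)).

Definition sprec (mu : seq G) (A B : tseries) : Prop :=
  forall a, supp A a -> exists2 b, supp B b & mprec mu a b.

Definition witnesses (mu : seq G) (T : tseries) : Prop :=
  exists m, is_mag T m /\
    forall a, supp T a -> exists2 g, mustar mu g & a = og_mul m g.

Definition tprec (A B : tseries) : Prop :=
  exists mb, is_mag B mb /\ forall a, supp A a -> og_lt a mb.

Definition tsub (A B : tseries) : tseries := fun g => A g - B g.

Definition tsim (A B : tseries) : Prop := tprec (tsub A B) A.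

(* product of series (Cauchy product; finite sums for grid-based series) *)
Definition tmul (A B : tseries) : tseries := fun g =>
  \sum_(p \in [set p : G * G | og_mul p.1 p.2 = g]) (A p.1 * B p.2).

Definition tsum (A : nat -> tseries) : tseries := fun g =>
  \sum_(j \in [set j : nat | (0 < j)%N]) A j g.

Definition geom_conv (mu : seq G) (A : nat -> tseries) : Prop :=
  forall j, (0 < j)%N -> witnesses mu (A j) /\ sprec mu (A j.+1) (A j).

End Series.

(* Geometric convergence of [sum B_j] makes every monomial of [B_j], j >= 2,
   strictly smaller than [mag B_1]; hence [mag S = mag B_1] with the same
   coefficient.  Since [A_j ~ B_j V], [mag A_j = mag B_j * mag V] with
   coefficient [B_j(mag B_j) V(mag V)], and because [mu] witnesses [A_j] and
   [B_j], the relation [mag B_(j+1) <^mu mag B_j] transfers to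
   [A_(j+1) <^mu A_j].  So [sum A_j] is [mu]-geometric as well, [T] and [SV]
   have the same dominant monomial [mag B_1 * mag V] and the same leading
   coefficient, which is [T ~ SV]. *)
From mathcomp Require Import all_boot all_algebra.
From mathcomp Require Import classical_sets fsbigop reals.

Set Implicit Arguments.
Unset Strict Implicit.
Unset Printing Implicit Defensive.
Import GRing.Theory.
Local Open Scope classical_set_scope.
Local Open Scope ring_scope.

Section OrderedGroup.
Variable G : ogroup.
Local Notation mul := (@og_mul G).
Local Notation one := (og_one G).
Local Notation lt := (@og_lt G).
Implicit Types a b c d x y z : G.

Definition og_le x y := lt x y \/ x = y.

Lemma og_mulr1 x : mul x one = x.
Proof. by rewrite og_mulC og_mul1. Qed.

Lemma og_mulrV x : mul x (og_inv x) = one.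
Proof. by rewrite og_mulC og_mulV. Qed.

Lemma og_mulAC x y z : mul (mul x y) z = mul (mul x z) y.
Proof. by rewrite -!og_mulA (og_mulC y). Qed.

Lemma og_lt_mull x y z : lt x y -> lt (mul z x) (mul z y).
Proof. by move=> lt_xy; rewrite ![mul z _]og_mulC; apply: og_lt_mul. Qed.

Lemma og_lt_le_trans x y z : lt x y -> og_le y z -> lt x z.
Proof. by move=> lt_xy [lt_yz|<-] //; apply: og_lt_trans lt_xy lt_yz. Qed.

Lemma og_le_lt_trans x y z : og_le x y -> lt y z -> lt x z.
Proof. by move=> [lt_xy|->] lt_yz //; apply: og_lt_trans lt_xy lt_yz. Qed.

Lemma og_lt_nle x y : lt x y -> ~ og_le y x.
Proof.
by move=> lt_xy le_yx; apply: og_lt_irr (og_le_lt_trans le_yx lt_xy).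
Qed.

Lemma og_lt_le_mul a b c d : lt a b -> og_le c d -> lt (mul a c) (mul b d).
Proof.
move=> lt_ab [lt_cd|<-]; last exact: og_lt_mul.
by apply: og_lt_trans (og_lt_mul c lt_ab) _; apply: og_lt_mull.
Qed.

Lemma og_le_mul a b c d : og_le a b -> og_le c d -> og_le (mul a c) (mul b d).
Proof.
move=> [lt_ab|->] le_cd; first by left; apply: og_lt_le_mul.
by case: le_cd => [lt_cd|->]; [left; apply: og_lt_mull | right].
Qed.

Lemma og_le_mul_eq a b c d : og_le a b -> og_le c d ->
  mul a c = mul b d -> a = b /\ c = d.
Proof.
move=> [lt_ab|->] le_cd e.
  by have := og_lt_le_mul lt_ab le_cd; rewrite e => /og_lt_irr.
case: le_cd e => [lt_cd|->] // e.
by have := og_lt_mull b lt_cd; rewrite e => /og_lt_irr.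
Qed.

Lemma prodG_cat (s t : seq G) : prodG (s ++ t) = mul (prodG s) (prodG t).
Proof. by elim: s => [|x s IH] /=; rewrite ?og_mul1 // IH og_mulA. Qed.

Variable mu : seq G.

Lemma muplus_mul x y : muplus mu x -> mustar mu y -> muplus mu (mul x y).
Proof.
case=> [s [s_nil [s_mu ->]]] [t [t_mu ->]]; exists (s ++ t).
split; first by case: s s_nil {s_mu}.
split; last by rewrite prodG_cat.
by move=> g; rewrite mem_cat => /orP[/s_mu|/t_mu].
Qed.

Lemma mprecP a b : mprec mu a b <-> exists2 p, muplus mu p & a = mul b p.
Proof.
split=> [prec_ab|[p mu_p ->]].
  by exists (mul a (og_inv b)); rewrite // (og_mulC a) og_mulA og_mulrV og_mul1.
by rewrite /mprec (og_mulC b) -og_mulA og_mulrV og_mulr1.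
Qed.

Lemma mprec_mulr a b c : mprec mu a b -> mprec mu (mul a c) (mul b c).
Proof.
by case/mprecP=> p mu_p ->; apply/mprecP; exists p; rewrite // og_mulAC.
Qed.

Lemma mprec_mulr_star a b g :
  mustar mu g -> mprec mu a b -> mprec mu (mul a g) b.
Proof.
move=> mu_g /mprecP[p mu_p ->]; apply/mprecP.
by exists (mul p g); [apply: muplus_mul | rewrite og_mulA].
Qed.

Lemma mprec_star_mulr a b g :
  mustar mu g -> mprec mu a (mul b g) -> mprec mu a b.
Proof.
move=> mu_g /mprecP[p mu_p ->]; apply/mprecP.
by exists (mul p g); [apply: muplus_mul | rewrite -og_mulA (og_mulC g)].
Qed.

Hypothesis mu_small : ratio_set mu.

Lemma prodG_le1 (s : seq G) : {subset s <= mu} -> og_le (prodG s) one.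
Proof.
elim: s => [|x s IH] s_mu /=; first by right.
left; rewrite -(og_mul1 one); apply: og_lt_le_mul.
  by apply: mu_small; apply: s_mu; rewrite inE eqxx.
by apply: IH => y y_s; apply: s_mu; rewrite inE y_s orbT.
Qed.

Lemma muplus_lt1 p : muplus mu p -> lt p one.
Proof.
case=> [[|x s] [nz_s [s_mu ->]]] //=; rewrite -(og_mul1 one).
apply: og_lt_le_mul; first by apply: mu_small; apply: s_mu; rewrite inE eqxx.
by apply: prodG_le1 => y y_s; apply: s_mu; rewrite inE y_s orbT.
Qed.

Lemma mprec_lt a b : mprec mu a b -> lt a b.
Proof.
case/mprecP=> p mu_p ->; rewrite -{2}(og_mulr1 b).
by apply: og_lt_mull; apply: muplus_lt1.
Qed.

End OrderedGroup.

Section TransSeries.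
Variables (G : ogroup) (R : realType).
Local Notation mul := (@og_mul G).
Local Notation lt := (@og_lt G).
Implicit Types (A B C V : tseries G R) (a b g m n : G).

Lemma fsbig_single (I : choiceType) (P : set I) (F : I -> R) i0 :
  P i0 -> (forall i, P i -> i <> i0 -> F i = 0) -> \sum_(i \in P) F i = F i0.
Proof.
move=> P_i0 F0; rewrite -(fsbig_widen [set i0] P F) ?fsbig_set1 //.
  by move=> i ->.
by move=> i [P_i ne_i]; apply: F0.
Qed.

Lemma fsbig_neq0 (I : choiceType) (P : set I) (F : I -> R) :
  \sum_(i \in P) F i != 0 -> exists2 i, P i & F i != 0.
Proof. exact: (@fsbigN1 _ _ _ unit I P (fun=> F) tt). Qed.

Lemma is_mag_uniq A m n : is_mag A m -> is_mag A n -> m = n.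
Proof.
move=> [A_m le_m] [A_n le_n].
case: (le_m _ A_n) => // lt_nm; case: (le_n _ A_m) => // lt_mn.
by have /og_lt_irr := og_lt_trans lt_nm lt_mn.
Qed.

Lemma supp_le_mag A m n : is_mag A m -> supp A n -> og_le n m.
Proof. by move=> [_ le_m] /le_m. Qed.

Lemma mag_lt_eq0 A m g : is_mag A m -> lt m g -> A g = 0.
Proof.
move=> A_m lt_mg; apply/eqP; apply: contraT.
by move=> /(supp_le_mag A_m) /(og_lt_nle lt_mg).
Qed.

Lemma mag_neq0 A m : is_mag A m -> A m != 0.
Proof. by case. Qed.

Lemma tmul_supp_le A B ma mb g : is_mag A ma -> is_mag B mb ->
  tmul A B g != 0 -> og_le g (mul ma mb).
Proof.
move=> A_ma B_mb /fsbig_neq0[[p1 p2] /= <-].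
rewrite mulf_eq0 negb_or => /andP[A_p1 B_p2].
by apply: og_le_mul; [apply: supp_le_mag A_ma _ | apply: supp_le_mag B_mb _].
Qed.

Lemma tmul_mag_coef A B ma mb : is_mag A ma -> is_mag B mb ->
  tmul A B (mul ma mb) = A ma * B mb.
Proof.
move=> A_ma B_mb; rewrite /tmul (@fsbig_single _ _ _ (ma, mb)) //.
move=> [p1 p2] /= e ne; apply/eqP; rewrite mulf_eq0; apply: contraT.
rewrite negb_or => /andP[A_p1 B_p2]; case: ne.
have le_p1 := supp_le_mag A_ma A_p1; have le_p2 := supp_le_mag B_mb B_p2.
by case: (og_le_mul_eq le_p1 le_p2 e) => -> ->.
Qed.

Lemma tmul_mag A B ma mb : is_mag A ma -> is_mag B mb ->
  is_mag (tmul A B) (mul ma mb).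
Proof.
move=> A_ma B_mb; split; last by move=> n /(tmul_supp_le A_ma B_mb).
by rewrite /supp /= tmul_mag_coef // mulf_neq0 ?mag_neq0.
Qed.

Lemma tsim_mag A C m : is_mag C m -> tsim A C -> is_mag A m /\ A m = C m.
Proof.
move=> C_m [mA [A_mA lt_mA]].
have tsub_neq0 g : tsub A C g != 0 -> lt g mA by apply: lt_mA.
case: (og_lt_total m mA) => [lt_m|[eq_m|lt_m]].
- have /og_lt_irr[] : lt mA mA.
    by apply: tsub_neq0; rewrite /tsub (mag_lt_eq0 C_m lt_m) subr0 mag_neq0.
- rewrite -eq_m in A_mA lt_mA *; split => //.
  apply/eqP; rewrite -subr_eq0; apply: contraT => /(tsub_neq0 m).
  by rewrite eq_m => /og_lt_irr.
- have /(og_lt_trans lt_m) /og_lt_irr[] : lt m mA.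
  apply: tsub_neq0.
  by rewrite /tsub (mag_lt_eq0 A_mA lt_m) sub0r oppr_eq0 mag_neq0.
Qed.

Lemma tsim_of_mag A C m : is_mag A m -> is_mag C m -> A m = C m -> tsim A C.
Proof.
move=> A_m C_m AC_m; exists m; split => // g; rewrite /supp /= /tsub.
case: (og_lt_total g m) => [//|[->|lt_mg]]; first by rewrite AC_m subrr eqxx.
by rewrite (mag_lt_eq0 A_m lt_mg) (mag_lt_eq0 C_m lt_mg) subrr eqxx.
Qed.

Lemma tsim_tmul_mag A B V mb mv : is_mag B mb -> is_mag V mv ->
  tsim A (tmul B V) -> is_mag A (mul mb mv) /\ A (mul mb mv) = B mb * V mv.
Proof.
by move=> B_mb V_mv /(tsim_mag (tmul_mag B_mb V_mv)); rewrite tmul_mag_coef.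
Qed.

Variable mu : seq G.

Lemma witnessesP A m : witnesses mu A -> is_mag A m ->
  forall a, supp A a -> exists2 g, mustar mu g & a = mul m g.
Proof. by move=> [n [A_n wA]] A_m; rewrite (is_mag_uniq A_m A_n). Qed.

Hypothesis mu_small : ratio_set mu.

Lemma sprec_lt_mag A B m a : sprec mu A B ->
  (forall b, supp B b -> og_le b m) -> supp A a -> lt a m.
Proof.
move=> prec_AB le_m /prec_AB[b B_b prec_ab].
exact: og_lt_le_trans (mprec_lt mu_small prec_ab) (le_m b B_b).
Qed.

Lemma geom_conv_supp_lt (A : nat -> tseries G R) m :
  geom_conv mu A -> is_mag (A 1%N) m ->
  forall j g, (1 < j)%N -> supp (A j) g -> lt g m.
Proof.
move=> geomA A_m.
have le_m j g : supp (A j.+1) g -> og_le g m.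
  elim: j g => [|j IH] g A_g; first exact: supp_le_mag A_m A_g.
  by left; apply: sprec_lt_mag (geomA j.+1 isT).2 IH A_g.
case=> [|[|j]] // g _; exact: sprec_lt_mag (geomA j.+1 isT).2 (le_m j).
Qed.

Lemma geom_conv_tsum_mag (A : nat -> tseries G R) m :
  geom_conv mu A -> is_mag (A 1%N) m ->
  is_mag (tsum A) m /\ tsum A m = A 1%N m.
Proof.
move=> geomA A_m; have lt_m := geom_conv_supp_lt geomA A_m.
have tsum_m : tsum A m = A 1%N m.
  apply: fsbig_single => // -[|[|j]] // _ _.
  by apply/eqP; apply: contraT => /(lt_m j.+2 m isT) /og_lt_irr.
split=> //; split; first by rewrite /supp /= tsum_m mag_neq0.
move=> g /fsbig_neq0[[|[|j]] // _ A_g]; first exact: supp_le_mag A_m A_g.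
by left; apply: lt_m A_g.
Qed.

Lemma geom_conv_tsim_tmul (A B : nat -> tseries G R) V mv :
  is_mag V mv -> geom_conv mu B ->
  (forall j, (0 < j)%N -> witnesses mu (A j) /\ tsim (A j) (tmul (B j) V)) ->
  geom_conv mu A.
Proof.
move=> V_mv geomB simA j j_gt0; split; first exact: (simA j j_gt0).1.
have [[mj [B_mj _]] prec_B] := geomB j j_gt0.
have [mj' [B_mj' _]] := (geomB j.+1 isT).1.
have [A_mj _] := tsim_tmul_mag B_mj V_mv (simA j j_gt0).2.
have [A_mj' _] := tsim_tmul_mag B_mj' V_mv (simA j.+1 isT).2.
have prec_mag : mprec mu mj' mj.
  have [b B_b prec_b] := prec_B mj' (mag_neq0 B_mj').
  have [g mu_g b_eq] := witnessesP (geomB j j_gt0).1 B_mj B_b.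
  by apply: (mprec_star_mulr mu_g); rewrite -b_eq.
move=> a A_a; exists (mul mj mv); first exact: mag_neq0 A_mj.
have [g mu_g ->] := witnessesP (simA j.+1 isT).1 A_mj' A_a.
exact: mprec_mulr_star mu_g (mprec_mulr _ prec_mag).
Qed.

End TransSeries.

Theorem lemma3p21 (G : ogroup) (R : realType) (mu : seq G)
    (V : tseries G R) (A B : nat -> tseries G R) :
  ratio_set mu ->
  witnesses mu V ->
  geom_conv mu B ->
  (forall j, (0 < j)%N -> witnesses mu (A j) /\ tsim (A j) (tmul (B j) V)) ->
  geom_conv mu A /\ tsim (tsum A) (tmul (tsum B) V).
Proof.
move=> mu_small [mV [V_mV _]] geomB simA.
have geomA := geom_conv_tsim_tmul V_mV geomB simA.
have [mB1 [B1_mB1 _]] := (geomB 1%N isT).1.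
have [A1_m A1_m_coef] := tsim_tmul_mag B1_mB1 V_mV (simA 1%N isT).2.
have [S_mB1 S_mB1_coef] := geom_conv_tsum_mag mu_small geomB B1_mB1.
have [T_m T_m_coef] := geom_conv_tsum_mag mu_small geomA A1_m.
split=> //; apply: tsim_of_mag T_m (tmul_mag S_mB1 V_mV) _.
by rewrite T_m_coef A1_m_coef tmul_mag_coef // S_mB1_coef.
Qed.
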